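(* Let $\mathbf{A},\mathbf{B}\in\mathbb{R}^{d\times d}$ be symmetric positive definite matrices with $\|\mathbf{A}-\mathbf{B}\|_2\le\varepsilon_1\|\mathbf{A}\|_2$, and let $\mathbf{r}_1,\mathbf{r}_2\in\mathbb{R}^d$ be unit vectors with $\|\mathbf{r}_1-\mathbf{r}_2\|_2\le\varepsilon_2$. If $\frac{\lambda_{\max}(\mathbf{A})}{\lambda_{\min}(\mathbf{A})}(\varepsilon_2+\varepsilon_1)\le\frac12$, then $$\Big\|\frac{\mathbf{A}\mathbf{r}_1}{\|\mathbf{A}\mathbf{r}_1\|_2}-\frac{\mathbf{B}\mathbf{r}_2}{\|\mathbf{B}\mathbf{r}_2\|_2}\Big\|_2\le4\frac{\lambda_{\max}(\mathbf{A})}{\lambda_{\min}(\mathbf{A})}(\varepsilon_2+\varepsilon_1).$$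
   Context: $\|\cdot\|_2$ on matrices is the operator norm; $\lambda_{\max}(\mathbf{A}),\lambda_{\min}(\mathbf{A})$ are the largest and smallest eigenvalues of $\mathbf{A}$. *)

From HB Require Import structures.
From mathcomp Require Import all_boot all_order all_algebra.
From mathcomp Require Import classical_sets reals.
Set Implicit Arguments. Unset Strict Implicit. Unset Printing Implicit Defensive.
Import Order.TTheory GRing.Theory Num.Theory.
Local Open Scope ring_scope.
Local Open Scope classical_set_scope.

Definition vnorm (R : realType) (d : nat) (v : 'cV[R]_d) : R :=
  Num.sqrt (\sum_(i < d) v i 0 ^+ 2).

Definition opnorm (R : realType) (d : nat) (A : 'M[R]_d) : R :=
  sup [set vnorm (A *m x) | x in [set x : 'cV[R]_d | vnorm x = 1]].

Definition eigenvalues (R : realType) (d : nat) (A : 'M[R]_d) : set R :=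
  [set a | eigenvalue A a].

Definition lambda_max (R : realType) (d : nat) (A : 'M[R]_d) : R :=
  sup (eigenvalues A).

Definition lambda_min (R : realType) (d : nat) (A : 'M[R]_d) : R :=
  inf (eigenvalues A).

Definition spd (R : realType) (d : nat) (A : 'M[R]_d) : Prop :=
  A^T = A /\ forall x : 'cV[R]_d, x != 0 -> 0 < (x^T *m A *m x) 0 0.

(* Write u = A r1 and v = B r2.  Normalization satisfies
   |u/|u| - v/|v|| <= 2 |u - v| / |u|, and
   |u - v| <= |A (r1 - r2)| + |(A - B) r2| <= ||A|| (eps2 + eps1).
   For a symmetric positive definite A, the spectral theorem gives
   ||A|| <= lambda_max A and |u| >= lambda_min A, so ||A|| / |u| is at most the
   condition number lambda_max A / lambda_min A. *)

From HB Require Import structures.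
From mathcomp Require Import all_boot all_order all_algebra.
From mathcomp Require Import classical_sets reals.
From mathcomp Require Import complex sesquilinear spectral.
From mathcomp Require Import ring lra.
Import Order.TTheory GRing.Theory Num.Theory.
Set Implicit Arguments. Unset Strict Implicit. Unset Printing Implicit Defensive.
Local Open Scope ring_scope.

Definition sqnorm (R : pzSemiRingType) (d : nat) (v : 'cV[R]_d) : R :=
  \sum_i v i 0 ^+ 2.

Definition dotv (R : pzSemiRingType) (d : nat) (u v : 'cV[R]_d) : R :=
  \sum_i u i 0 * v i 0.

Section SquaredNorm.
Variables (R : realFieldType) (d : nat).
Implicit Types (v x y : 'cV[R]_d).

Lemma sqnorm_ge0 v : 0 <= sqnorm v.
Proof. by apply: sumr_ge0 => i _; rewrite sqr_ge0. Qed.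

Lemma sqnorm_eq0 v : (sqnorm v == 0) = (v == 0).
Proof.
apply/idP/eqP => [/eqP v0|->]; last first.
  by rewrite /sqnorm big1 // => i _; rewrite mxE expr0n.
apply/matrixP => i j; rewrite ord1 mxE; apply/eqP; rewrite -sqrf_eq0.
by move/psumr_eq0P: v0 => -> // k _; rewrite sqr_ge0.
Qed.

Lemma sqnorm_gt0 v : (0 < sqnorm v) = (v != 0).
Proof. by rewrite lt_def sqnorm_eq0 sqnorm_ge0 andbT. Qed.

Lemma sqnormZ c v : sqnorm (c *: v) = c ^+ 2 * sqnorm v.
Proof. by rewrite /sqnorm mulr_sumr; apply: eq_bigr => i _; rewrite mxE exprMn. Qed.

Lemma sqnormDZ x y t :
  sqnorm (x + t *: y) = sqnorm x + 2 * t * dotv x y + t ^+ 2 * sqnorm y.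
Proof.
rewrite /sqnorm /dotv !mulr_sumr -!big_split /=; apply: eq_bigr => i _.
by rewrite !mxE; ring.
Qed.

Lemma dotv_sqr_le x y : dotv x y ^+ 2 <= sqnorm x * sqnorm y.
Proof.
have [->|y_neq0] := eqVneq y 0.
  rewrite /dotv big1 => [|i _]; last by rewrite mxE mulr0.
  by rewrite expr0n /= mulr_ge0 ?sqnorm_ge0.
have y_gt0 : 0 < sqnorm y by rewrite sqnorm_gt0.
(* expand [0 <= |x + t y|^2] at the minimizing [t = - <x, y> / |y|^2] *)
have := sqnorm_ge0 (x + (- (dotv x y / sqnorm y)) *: y).
rewrite sqnormDZ => /mulr_ge0 /(_ (ltW y_gt0)).
have : - (dotv x y / sqnorm y) * sqnorm y = - dotv x y by rewrite mulNr divfK ?gt_eqF.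
nra.
Qed.

Lemma sqnorm_mulmx_le (M : 'M[R]_d) x :
  sqnorm (M *m x) <= (\sum_i \sum_j M i j ^+ 2) * sqnorm x.
Proof.
rewrite mulr_suml; apply: ler_sum => i _.
have -> : \sum_j M i j ^+ 2 = sqnorm (row i M)^T.
  by apply: eq_bigr => j _; rewrite !mxE.
have -> : (M *m x) i 0 = dotv (row i M)^T x.
  by rewrite mxE; apply: eq_bigr => j _; rewrite !mxE.
exact: dotv_sqr_le.
Qed.

End SquaredNorm.

Section EuclideanNorm.
Variables (R : realType) (d : nat).
Implicit Types (u v x y : 'cV[R]_d).

Lemma vnormE v : vnorm v = Num.sqrt (sqnorm v).
Proof. by []. Qed.

Lemma vnorm_ge0 v : 0 <= vnorm v.
Proof. exact: sqrtr_ge0. Qed.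

Lemma sqr_vnorm v : vnorm v ^+ 2 = sqnorm v.
Proof. exact/sqr_sqrtr/sqnorm_ge0. Qed.

Lemma vnorm_gt0 v : (0 < vnorm v) = (v != 0).
Proof. by rewrite vnormE sqrtr_gt0 sqnorm_gt0. Qed.

Lemma vnormZ c v : vnorm (c *: v) = `|c| * vnorm v.
Proof. by rewrite !vnormE sqnormZ sqrtrM ?sqr_ge0 // sqrtr_sqr. Qed.

Lemma vnormN v : vnorm (- v) = vnorm v.
Proof. by rewrite -scaleN1r vnormZ normrN1 mul1r. Qed.

Lemma vnormD x y : vnorm (x + y) <= vnorm x + vnorm y.
Proof.
have dot_le : dotv x y <= vnorm x * vnorm y.
  apply: ler_normlW; rewrite -ler_sqr ?nnegrE ?mulr_ge0 ?vnorm_ge0 //.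
  by rewrite real_normK ?num_real // exprMn !sqr_vnorm dotv_sqr_le.
rewrite -ler_sqr ?nnegrE ?addr_ge0 ?vnorm_ge0 // sqr_vnorm -[y]scale1r sqnormDZ.
rewrite scale1r sqrrD !sqr_vnorm; lra.
Qed.

Lemma vnorm_lerB_dist x y : `|vnorm x - vnorm y| <= vnorm (x - y).
Proof.
rewrite ler_norml; apply/andP; split.
  by have := vnormD (y - x) x; rewrite subrK -[y - x]opprB vnormN; lra.
by have := vnormD (x - y) y; rewrite subrK; lra.
Qed.

Lemma vnorm0 : vnorm (0 : 'cV[R]_d) = 0.
Proof. by apply/eqP; rewrite eq_le vnorm_ge0 andbT leNgt vnorm_gt0 eqxx. Qed.

Lemma vnorm_sub_normalize u v : 0 < vnorm u ->
  vnorm ((vnorm u)^-1 *: u - (vnorm v)^-1 *: v) <= 2 * vnorm (u - v) / vnorm u.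
Proof.
set a := vnorm u; set b := vnorm v => a_gt0.
have -> : a^-1 *: u - b^-1 *: v = a^-1 *: (u - v) + (a^-1 - b^-1) *: v.
  by rewrite scalerBr scalerBl addrA subrK.
have ia_ge0 : 0 <= a^-1 by rewrite invr_ge0 ltW.
apply: le_trans (vnormD _ _) _; rewrite !vnormZ -/b (ger0_norm ia_ge0).
suff : `|a^-1 - b^-1| * b <= vnorm (u - v) / a by lra.
have [b0|b_neq0] := eqVneq b 0.
  by rewrite b0 mulr0 divr_ge0 ?vnorm_ge0 ?ltW.
have -> : `|a^-1 - b^-1| * b = `|b - a| / a.
  have e : (a^-1 - b^-1) * b = (b - a) / a by field; rewrite b_neq0 gt_eqF.
  have b_ge0 : 0 <= b := vnorm_ge0 v.
  by rewrite -[X in _ * X](ger0_norm b_ge0) -normrM e normrM (ger0_norm ia_ge0).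
by apply: ler_wpM2r => //; rewrite distrC vnorm_lerB_dist.
Qed.

End EuclideanNorm.

Lemma vnorm1_dim_gt0 (R : realType) d (v : 'cV[R]_d) : vnorm v = 1 -> (0 < d)%N.
Proof.
case: d v => // v; rewrite vnormE /sqnorm big_ord0 sqrtr0 => /eqP.
by rewrite eq_sym oner_eq0.
Qed.

Section OperatorNorm.
Variables (R : realType) (d : nat) (M : 'M[R]_d).

Lemma vnorm_mulmx_le_opnorm x : vnorm (M *m x) <= opnorm M * vnorm x.
Proof.
have unit_le z : vnorm z = 1 -> vnorm (M *m z) <= opnorm M.
  move=> z1; apply: ub_le_sup; last by exists z.
  exists (Num.sqrt (\sum_i \sum_j M i j ^+ 2)) => _ [y y1 <-].
  rewrite vnormE ler_sqrt; last by do 2!apply: sumr_ge0 => ? _; rewrite sqr_ge0.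
  by rewrite -[X in _ <= X]mulr1 -(expr1n _ 2) -y1 sqr_vnorm sqnorm_mulmx_le.
have [->|x_neq0] := eqVneq x 0; first by rewrite mulmx0 vnorm0 mulr0.
have x_gt0 : 0 < vnorm x by rewrite vnorm_gt0.
have := unit_le ((vnorm x)^-1 *: x).
rewrite -scalemxAr !vnormZ ger0_norm ?invr_ge0 ?(ltW x_gt0) //.
rewrite mulVf ?gt_eqF // => /(_ erefl).
by rewrite ler_pdivrMl // mulrC.
Qed.

Lemma opnorm_le_ub K : (exists x : 'cV[R]_d, vnorm x = 1) ->
  (forall x, vnorm x = 1 -> vnorm (M *m x) <= K) -> opnorm M <= K.
Proof.
move=> [x x1] le_K; apply: ge_sup; first by exists (vnorm (M *m x)), x.
by move=> _ [z z1 <-]; apply: le_K.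
Qed.

End OperatorNorm.

Lemma vnorm_mulmx_sub_le (R : realType) d (A B : 'M[R]_d) (r1 r2 : 'cV[R]_d)
    (eps1 eps2 : R) :
  opnorm (A - B) <= eps1 * opnorm A -> vnorm r2 = 1 -> vnorm (r1 - r2) <= eps2 ->
  vnorm (A *m r1 - B *m r2) <= opnorm A * (eps2 + eps1).
Proof.
move=> dAB r2_unit dr.
have opA_ge0 : 0 <= opnorm A.
  have := vnorm_mulmx_le_opnorm A r2; rewrite r2_unit mulr1.
  exact: le_trans (vnorm_ge0 _).
have -> : A *m r1 - B *m r2 = A *m (r1 - r2) + (A - B) *m r2.
  by rewrite mulmxBr mulmxBl addrA subrK.
apply: le_trans (vnormD _ _) _.
have := vnorm_mulmx_le_opnorm (A - B) r2; rewrite r2_unit mulr1.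
have := le_trans (vnorm_mulmx_le_opnorm A (r1 - r2)) (ler_wpM2l opA_ge0 dr).
lra.
Qed.

Section HermitianSquare.
Variables (C : numClosedFieldType) (n : nat).
Local Open Scope sesquilinear_scope.

Lemma tC_mulmx_selfE (z : 'cV[C]_n) : (z^t* *m z) 0 0 = \sum_i `|z i 0| ^+ 2.
Proof. by rewrite mxE; apply: eq_bigr => i _; rewrite !mxE normCK mulrC. Qed.

Lemma unitary_tC_mulmx_self (Q : 'M[C]_n) (z : 'cV[C]_n) :
  Q \is unitarymx -> (Q *m z)^t* *m (Q *m z) = z^t* *m z.
Proof. by move=> Q_unitary; rewrite trmx_mul map_mxM mulmxA mulmxKtV. Qed.

End HermitianSquare.

Section RealComplex.
Variable R : rcfType.
Local Open Scope sesquilinear_scope.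
Local Open Scope complex_scope.
Local Notation toC := (real_complex R).

Lemma map_real_complex_tC m n (N : 'M[R]_(m, n)) :
  (map_mx toC N)^t* = map_mx toC N^T.
Proof. by apply/matrixP => i j; rewrite !mxE; exact: conjc_real. Qed.

Lemma sqnorm_real_complex d (x : 'cV[R]_d) :
  (sqnorm x)%:C = ((map_mx toC x)^t* *m map_mx toC x) 0 0.
Proof.
rewrite map_real_complex_tC -map_mxM !mxE; congr _%:C.
by apply: eq_bigr => i _; rewrite !mxE expr2.
Qed.

End RealComplex.

(* A real symmetric matrix is diagonalized through its complexification,
   which is hermitian. *)
Section RealSymmetricSpectrum.
Variables (R : rcfType) (d : nat) (M : 'M[R]_d).
Hypothesis M_sym : M^T = M.

Local Open Scope sesquilinear_scope.
Local Open Scope complex_scope.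
Local Notation toC := (real_complex R).

Let Mc := map_mx toC M.
Let P := spectralmx Mc.
Let D := spectral_diag Mc.

Let Mc_herm : Mc \is hermsymmx.
Proof.
by rewrite is_hermitianmxE expr0 scale1r map_real_complex_tC M_sym.
Qed.

Let P_unitary : P \is unitarymx := spectral_unitarymx Mc.

Let McE : Mc = P^t* *m diag_mx D *m P.
Proof.
by rewrite -invmx_unitary //; apply/orthomx_spectralP/hermitian_normalmx.
Qed.

Let D_real i : D 0 i \is Num.real.
Proof. by move/mxOverP: (hermitian_spectral_diag_real Mc_herm); apply. Qed.

Let eigenvalue_spectral_diag i : eigenvalue M (complex.Re (D 0 i)).
Proof.
rewrite eigenvalue_root_char -(fmorph_root toC) map_char_poly -/Mc /= RRe_real //.
rewrite -eigenvalue_root_char; apply/eigenvalueP; exists (row i P).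
  rewrite -row_mul McE !mulmxA (unitarymxP P_unitary) mul1mx mul_diag_mx.
  by apply/rowP => j; rewrite !mxE.
apply/eqP => Pi0; have /row_unitarymxP/(_ i i) := P_unitary.
by rewrite Pi0 dotmxE mul0mx mxE eqxx => /eqP; rewrite eq_sym oner_eq0.
Qed.

Let spectral_weights (x : 'cV[R]_d) :
  exists2 w : 'I_d -> R, (forall i, 0 <= w i) &
    sqnorm x = \sum_i w i /\
    sqnorm (M *m x) = \sum_i complex.Re (D 0 i) ^+ 2 * w i.
Proof.
set y := P *m map_mx toC x.
exists (fun i => complex.Re (y i 0) ^+ 2 + complex.Im (y i 0) ^+ 2) => [i|].
  by rewrite addr_ge0 ?sqr_ge0.
split; apply: complexI; rewrite sqnorm_real_complex rmorph_sum.
  rewrite -(unitary_tC_mulmx_self _ P_unitary) tC_mulmx_selfE.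
  by apply: eq_bigr => i _; exact: (esym (add_Re2_Im2 _)).
have -> : map_mx toC (M *m x) = P^t* *m (diag_mx D *m y).
  by rewrite map_mxM -/Mc McE -!mulmxA.
rewrite unitary_tC_mulmx_self ?trmxC_unitary // tC_mulmx_selfE.
apply: eq_bigr => i _; rewrite mul_diag_mx mxE normrM exprMn rmorphM rmorphXn /=.
by rewrite RRe_real // real_normK // add_Re2_Im2.
Qed.

Theorem sym_spectral_weights :
  exists2 r : 'I_d -> R, (forall i, eigenvalue M (r i)) &
    forall x : 'cV[R]_d, exists2 w : 'I_d -> R, (forall i, 0 <= w i) &
      sqnorm x = \sum_i w i /\ sqnorm (M *m x) = \sum_i r i ^+ 2 * w i.
Proof.
exists (fun i => complex.Re (D 0 i)); first exact: eigenvalue_spectral_diag.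
exact: spectral_weights.
Qed.

End RealSymmetricSpectrum.

Lemma sym_eigenvalue_cV (F : fieldType) n (M : 'M[F]_n) a :
  M^T = M -> eigenvalue M a -> exists2 x : 'cV[F]_n, x != 0 & M *m x = a *: x.
Proof.
move=> M_sym /eigenvalueP [v vM v_neq0]; exists v^T.
  by rewrite -(inj_eq (@trmx_inj _ _ _)) trmxK trmx0.
by rewrite -{1}M_sym -trmx_mul vM linearZ.
Qed.

Section PositiveDefinite.
Variables (R : realType) (d : nat) (A : 'M[R]_d).
Hypothesis A_spd : spd A.

Lemma spd_eigenvalue_gt0 a : eigenvalue A a -> 0 < a.
Proof.
case: A_spd => A_sym A_pos /(sym_eigenvalue_cV A_sym) [x x_neq0 Ax].
have := A_pos x x_neq0; rewrite -mulmxA Ax -scalemxAr mxE.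
have -> : (x^T *m x) 0 0 = sqnorm x.
  by rewrite mxE; apply: eq_bigr => i _; rewrite mxE expr2.
by rewrite pmulr_lgt0 // sqnorm_gt0.
Qed.

Hypothesis d_gt0 : (0 < d)%N.

Lemma spd_extreme_eigenvalues : exists rmin rmax,
  [/\ eigenvalue A rmin, eigenvalue A rmax &
      forall x, rmin ^+ 2 * sqnorm x <= sqnorm (A *m x) <= rmax ^+ 2 * sqnorm x].
Proof.
have [r r_eig r_weights] := sym_spectral_weights A_spd.1.
have r_gt0 i : 0 < r i := spd_eigenvalue_gt0 (r_eig i).
have sqr_le i j : r i <= r j -> r i ^+ 2 <= r j ^+ 2.
  by move=> le_ij; rewrite ler_sqr ?nnegrE ?(ltW (r_gt0 _)).
pose i0 := Ordinal d_gt0.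
have [imin _ min_r] := @arg_minP _ R _ i0 xpredT r isT.
have [imax _ max_r] := @arg_maxP _ R _ i0 xpredT r isT.
exists (r imin), (r imax); split => // x.
have [w w_ge0 [-> ->]] := r_weights x.
rewrite !mulr_sumr; apply/andP; split; apply: ler_sum => i _;
  by apply: ler_wpM2r => //; apply: sqr_le; first [exact: min_r | exact: max_r].
Qed.

Lemma spd_vnorm_mulmx_bounds : 0 < lambda_min A /\
  forall x, lambda_min A * vnorm x <= vnorm (A *m x) <= lambda_max A * vnorm x.
Proof.
have [rmin [rmax [eig_min eig_max bounds]]] := spd_extreme_eigenvalues.
have rmin_gt0 := spd_eigenvalue_gt0 eig_min.
have rmax_gt0 := spd_eigenvalue_gt0 eig_max.
have eig_between a : eigenvalue A a -> rmin <= a <= rmax.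
  move=> eig_a; have a_gt0 := spd_eigenvalue_gt0 eig_a.
  have [x x_neq0 Ax] := sym_eigenvalue_cV A_spd.1 eig_a.
  have := bounds x; rewrite Ax sqnormZ !ler_pM2r ?sqnorm_gt0 //.
  by rewrite !ler_sqr ?nnegrE ?(ltW rmin_gt0) ?(ltW a_gt0) ?(ltW rmax_gt0).
have lmin : lambda_min A = rmin.
  apply/le_anti/andP; split.
    by apply: ge_inf eig_min; exists rmin => a /eig_between /andP[].
  by apply: lb_le_inf; [exists rmin | move=> a /eig_between /andP[]].
have lmax : lambda_max A = rmax.
  apply/le_anti/andP; split.
    by apply: ge_sup; [exists rmax | move=> a /eig_between /andP[]].
  by apply: ub_le_sup eig_max; exists rmax => a /eig_between /andP[].
rewrite lmin lmax; split => // x.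
have /andP[lower upper] := bounds x.
by apply/andP; split; rewrite -ler_sqr ?nnegrE ?mulr_ge0 ?vnorm_ge0
  ?(ltW rmin_gt0) ?(ltW rmax_gt0) // exprMn !sqr_vnorm.
Qed.

Lemma spd_opnorm_le_cond x : vnorm x = 1 ->
  opnorm A <= lambda_max A / lambda_min A * vnorm (A *m x).
Proof.
move=> x_unit; have [lmin_gt0 A_bounds] := spd_vnorm_mulmx_bounds.
set k := lambda_max A / lambda_min A.
have lmaxE : lambda_max A = k * lambda_min A by rewrite divfK ?gt_eqF.
have /andP[lmin_le le_lmax] := A_bounds x; rewrite x_unit !mulr1 in lmin_le le_lmax.
have k_ge0 : 0 <= k.
  have a_gt0 : 0 < vnorm (A *m x) := lt_le_trans lmin_gt0 lmin_le.
  by rewrite divr_ge0 ?ltW // (lt_le_trans a_gt0 le_lmax).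
apply: opnorm_le_ub; first by exists x.
move=> y y_unit; have /andP[_] := A_bounds y; rewrite y_unit mulr1 lmaxE.
by move/le_trans; apply; rewrite ler_wpM2l.
Qed.

End PositiveDefinite.

Theorem lemma1 (R : realType) (d : nat) (A B : 'M[R]_d) (r1 r2 : 'cV[R]_d)
  (eps1 eps2 : R) :
  spd A -> spd B ->
  opnorm (A - B) <= eps1 * opnorm A ->
  vnorm r1 = 1 -> vnorm r2 = 1 ->
  vnorm (r1 - r2) <= eps2 ->
  lambda_max A / lambda_min A * (eps2 + eps1) <= 1 / 2 ->
  vnorm ((vnorm (A *m r1))^-1 *: (A *m r1) - (vnorm (B *m r2))^-1 *: (B *m r2))
    <= 4 * (lambda_max A / lambda_min A) * (eps2 + eps1).
Proof.
move=> A_spd _ dAB r1_unit r2_unit dr _.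
have d_gt0 := vnorm1_dim_gt0 r1_unit.
have [lmin_gt0 A_bounds] := spd_vnorm_mulmx_bounds A_spd d_gt0.
set a := vnorm (A *m r1); set k := lambda_max A / lambda_min A.
have a_gt0 : 0 < a.
  by have /andP[+ _] := A_bounds r1; rewrite r1_unit mulr1; exact: lt_le_trans.
have opA_le_ka : opnorm A <= k * a := spd_opnorm_le_cond A_spd d_gt0 r1_unit.
have opA_gt0 : 0 < opnorm A.
  by have := vnorm_mulmx_le_opnorm A r1; rewrite r1_unit mulr1; exact: lt_le_trans.
have dABr := vnorm_mulmx_sub_le dAB r2_unit dr.
have e_ge0 : 0 <= eps2 + eps1.
  by rewrite -(pmulr_rge0 _ opA_gt0) (le_trans (vnorm_ge0 _) dABr).
have ratio : vnorm (A *m r1 - B *m r2) / a <= k * (eps2 + eps1).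
  by rewrite ler_pdivrMr // (le_trans dABr) // mulrAC ler_wpM2r.
apply: le_trans (vnorm_sub_normalize _ a_gt0) _.
have := divr_ge0 (vnorm_ge0 (A *m r1 - B *m r2)) (ltW a_gt0).
lra.
Qed.
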